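(* Let $\mathcal R^{rrc}$ be a rich single-crossing domain of restricted classical preferences, $[\underline R,\overline R]\subseteq\mathcal R^{rrc}$ a closed interval, and $F:[\underline R,\overline R]\to\mathbb{Z}$ a mechanism (so $F(R)\in[0,t_R]\times[0,1]$ for all $R$) with finite range such that $F(R)\,I\,(0,0)$ implies $F(R)=(0,0)$. Then $F$ is restricted strategy-proof if and only if $F$ is monotone and $V^F$ is continuous.
   Context: $\mathbb{Z}=[0,\infty)\times[0,1]$; $(t',q')<(t'',q'')$ means $t'<t''$, $q'<q''$; $x\le y$ means $x=y$ or $x<y$; $\square(z)=\{x:x\le z\}$. A restricted classical preference is a complete transitive relation $R$ (strict part $P$, indifference $I$) on $[0,t_R]\times[0,1]$, $0<t_R<\infty$, such that: for $q\in(0,1]$, $t_R\ge t''>t'\ge0$ implies $(t',q)P(t'',q)$; for $t\in[0,t_R)$, $1\ge q''>q'\ge0$ implies $(t,q'')P(t,q')$; $(0,0)I(t_R,q)$ for all $q$ and $(0,0)I(t,0)$ for $t\in[0,t_R)$; $R$ is continuous on $[0,t_R]\times[0,1]$. Two such $R',R''$ with $t_{R'}\ne t_{R''}$ satisfy single-crossing if for every $(t,q)$ with $q>0$, $t<\min\{t_{R'},t_{R''}\}$ their indifference sets through $(t,q)$ meet only at $(t,q)$. A rich single-crossing domain $\mathcal R^{rrc}$ is a set of pairwise single-crossing restricted classical preferences such that for all $x'<x''$ some member is indifferent between them. It is ordered by $R'\prec R''$ iff $t_{R'}<t_{R''}$ (this coincides with $R''$ cutting $R'$ from above, i.e. $\square(z)\cap\{x:xR''z\}\subseteq\square(z)\cap\{x:xR'z\}$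 at bundles $z=(t,q)$ with $q>0,t<t_{R'}$), with the corresponding order topology; $[\underline R,\overline R]=\{R:\underline R\precsim R\precsim\overline R\}$. A mechanism is $F:[\underline R,\overline R]\to\mathbb{Z}$ with $F(R)\in[0,t_R]\times[0,1]$. $F$ is restricted strategy-proof if for all $R,R'$ with $F(R')\in[0,t_R]\times[0,1]$, $F(R)\,R\,F(R')$. $F$ is monotone if $R'\prec R''$ implies $F(R')\le F(R'')$. $V^F$ is continuous if for any $R$ and any monotone sequence $R^n\to R$ (i.e. $R^n\precsim R^{n+1}$ for all $n$, or $R^{n+1}\precsim R^n$ for all $n$), $F(R^n)$ converges to some $z=(t_z,q_z)$ with $t_z\le t_R$ and $z\,I\,F(R)$. *)

From Stdlib Require Import Reals List.
Open Scope R_scope.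

(* A bundle (t, q) in Z = [0,oo) x [0,1]: t = payment, q = object quality/quantity. *)
Definition bundle : Type := (R * R)%type.

Definition inZ (x : bundle) : Prop :=
  0 <= fst x /\ 0 <= snd x <= 1.

Definition blt (x y : bundle) : Prop := fst x < fst y /\ snd x < snd y.
Definition ble (x y : bundle) : Prop := x = y \/ blt x y.

Definition in_box (t : R) (x : bundle) : Prop :=
  0 <= fst x <= t /\ 0 <= snd x <= 1.

(* A candidate preference: its bound t_R and its weak preference relation R
   (x R y read "x is at least as good as y"); only its values on
   [0,t_R] x [0,1] are meaningful. *)
Record pref : Type := Pref { tR : R; rel : bundle -> bundle -> Prop }.

Definition P (Rp : pref) (x y : bundle) : Prop := rel Rp x y /\ ~ rel Rp y x.
Definition I (Rp : pref) (x y : bundle) : Prop := rel Rp x y /\ rel Rp y x.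

Definition bbox (Rp : pref) (x : bundle) : Prop := in_box (tR Rp) x.

Definition bcv (x : nat -> bundle) (z : bundle) : Prop :=
  Un_cv (fun n => fst (x n)) (fst z) /\ Un_cv (fun n => snd (x n)) (snd z).

(* continuity of R on [0,t_R] x [0,1]: upper and lower contour sets of every
   bundle are closed (relative to the box) *)
Definition rel_continuous (Rp : pref) : Prop :=
  forall (y : bundle) (x : nat -> bundle) (z : bundle),
    bbox Rp y -> (forall n, bbox Rp (x n)) -> bbox Rp z -> bcv x z ->
    ((forall n, rel Rp (x n) y) -> rel Rp z y) /\
    ((forall n, rel Rp y (x n)) -> rel Rp y z).

Definition restricted_classical (Rp : pref) : Prop :=
  0 < tR Rp /\
  (forall x y, bbox Rp x -> bbox Rp y -> rel Rp x y \/ rel Rp y x) /\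
  (forall x y z, bbox Rp x -> bbox Rp y -> bbox Rp z ->
     rel Rp x y -> rel Rp y z -> rel Rp x z) /\
  (forall q t1 t2, 0 < q <= 1 -> 0 <= t1 -> t1 < t2 -> t2 <= tR Rp ->
     P Rp (t1, q) (t2, q)) /\
  (forall t q1 q2, 0 <= t < tR Rp -> 0 <= q1 -> q1 < q2 -> q2 <= 1 ->
     P Rp (t, q2) (t, q1)) /\
  (forall q, 0 <= q <= 1 -> I Rp (0, 0) (tR Rp, q)) /\
  (forall t, 0 <= t < tR Rp -> I Rp (0, 0) (t, 0)) /\
  rel_continuous Rp.

Definition single_crossing (R1 R2 : pref) : Prop :=
  tR R1 <> tR R2 /\
  forall t q, 0 < q <= 1 -> 0 <= t -> t < Rmin (tR R1) (tR R2) ->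
    forall x, bbox R1 x -> bbox R2 x ->
      I R1 x (t, q) -> I R2 x (t, q) -> x = (t, q).

Definition rich_single_crossing (D : pref -> Prop) : Prop :=
  (forall Rp, D Rp -> restricted_classical Rp) /\
  (forall R1 R2, D R1 -> D R2 -> R1 <> R2 -> single_crossing R1 R2) /\
  (forall x1 x2, inZ x1 -> inZ x2 -> blt x1 x2 ->
     exists Rp, D Rp /\ bbox Rp x1 /\ bbox Rp x2 /\ I Rp x1 x2).

Definition prec (R1 R2 : pref) : Prop := tR R1 < tR R2.
Definition precsim (R1 R2 : pref) : Prop := tR R1 <= tR R2.

Definition interval (D : pref -> Prop) (Rlo Rhi : pref) (Rp : pref) : Prop :=
  D Rp /\ precsim Rlo Rp /\ precsim Rp Rhi.

(* convergence of a sequence in D with respect to the order topology of D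
   (generated by the open rays {x | x prec b} and {x | a prec x}, a, b in D) *)
Definition order_cv (D : pref -> Prop) (Rs : nat -> pref) (Rp : pref) : Prop :=
  (forall b, D b -> prec Rp b -> exists N, forall n, (N <= n)%nat -> prec (Rs n) b) /\
  (forall a, D a -> prec a Rp -> exists N, forall n, (N <= n)%nat -> prec a (Rs n)).

Definition monotone_seq (Rs : nat -> pref) : Prop :=
  (forall n, precsim (Rs n) (Rs (S n))) \/ (forall n, precsim (Rs (S n)) (Rs n)).

Definition is_mechanism (dom : pref -> Prop) (F : pref -> bundle) : Prop :=
  forall Rp, dom Rp -> bbox Rp (F Rp).

Definition finite_range (dom : pref -> Prop) (F : pref -> bundle) : Prop :=
  exists l : list bundle, forall Rp, dom Rp -> In (F Rp) l.

Definition restricted_SP (dom : pref -> Prop) (F : pref -> bundle) : Prop :=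
  forall Rp Rq, dom Rp -> dom Rq -> bbox Rp (F Rq) -> rel Rp (F Rp) (F Rq).

Definition monotone_mech (dom : pref -> Prop) (F : pref -> bundle) : Prop :=
  forall R1 R2, dom R1 -> dom R2 -> prec R1 R2 -> ble (F R1) (F R2).

Definition VF_continuous (D dom : pref -> Prop) (F : pref -> bundle) : Prop :=
  forall (Rp : pref) (Rs : nat -> pref),
    dom Rp -> (forall n, dom (Rs n)) -> monotone_seq Rs -> order_cv D Rs Rp ->
    exists z : bundle, bcv (fun n => F (Rs n)) z /\ fst z <= tR Rp /\
      bbox Rp z /\ I Rp z (F Rp).

(* Single crossing makes an indifference between bundles x < w decisive for the
   rest of the domain: every lower preference strictly prefers x and every higher
   one strictly prefers w.  Strategy-proofness therefore forces monotonicity; a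
   monotone mechanism with finite range is eventually constant along monotone
   sequences, and the value it takes near R must be R-indifferent to F(R), which
   is the continuity of V^F.  Conversely, if some F(Q) were strictly better than
   F(R0) for R0, take the supremum (or infimum) of the bounds t_Q of such Q on one
   side of t_R0: continuity of V^F together with the indifference argument shows
   that the set of these bounds is closed under monotone limits and open towards
   t_R0, so it is empty. *)

From Stdlib Require Import Reals List Lra Lia Classical ClassicalEpsilon.
Open Scope R_scope.

(** * Real sequences *)

Lemma Un_cv_const (a : R) : Un_cv (fun _ => a) a.
Proof.
  intros eps Heps; exists 0%nat; intros n _.
  unfold Rdist; rewrite Rminus_diag, Rabs_R0; lra.
Qed.

Lemma Un_cv_le_bound (s : nat -> R) (t b : R) :
  Un_cv s t -> (forall n, s n <= b) -> t <= b.
Proof. intros Hs Hb; exact (Rle_cv_lim Hb Hs (Un_cv_const b)). Qed.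

Lemma Un_cv_ge_bound (s : nat -> R) (t a : R) :
  Un_cv s t -> (forall n, a <= s n) -> a <= t.
Proof. intros Hs Ha; exact (Rle_cv_lim Ha (Un_cv_const a) Hs). Qed.

Lemma Un_cv_squeeze_inv (u : nat -> R) (W C : R) :
  0 <= C -> (forall n, Rabs (u n - W) <= C * / (INR n + 1)) -> Un_cv u W.
Proof.
  intros HC Hu eps Heps.
  destruct (@RinvN_cv (eps / (C + 1))) as [N HN]; [apply Rdiv_lt_0_compat; lra|].
  exists N; intros n Hn; specialize (HN n Hn); specialize (Hu n); unfold Rdist in *; simpl in HN.
  assert (Hpos : 0 < / (INR n + 1)) by (apply Rinv_0_lt_compat; pose proof (pos_INR n); lra).
  rewrite Rminus_0_r, Rabs_right in HN by lra.
  apply Rle_lt_trans with ((C + 1) * / (INR n + 1)); [nra|].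
  apply Rmult_lt_reg_l with (/ (C + 1)); [apply Rinv_0_lt_compat; lra|].
  rewrite <- Rmult_assoc, Rinv_l, Rmult_1_l by lra; unfold Rdiv in HN; lra.
Qed.

Definition approach (a b : R) (n : nat) : R := a + (b - a) / (INR n + 2).

Lemma approach_between (a b : R) (n : nat) : a < b -> a < approach a b n < b.
Proof.
  intros Hab; pose proof (pos_INR n); unfold approach.
  assert (0 < (b - a) / (INR n + 2) < b - a); [|lra].
  split.
  - apply Rdiv_lt_0_compat; lra.
  - apply Rmult_lt_reg_r with (INR n + 2); [lra|].
    unfold Rdiv; rewrite Rmult_assoc, Rinv_l by lra; nra.
Qed.

Lemma approach_decreasing (a b : R) : a <= b -> Un_decreasing (approach a b).
Proof.
  intros Hab n; unfold approach; rewrite S_INR; pose proof (pos_INR n).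
  apply Rplus_le_compat_l; unfold Rdiv; apply Rmult_le_compat_l; [lra|].
  apply Rinv_le_contravar; lra.
Qed.

Lemma approach_cv (a b : R) : Un_cv (approach a b) a.
Proof.
  apply Un_cv_squeeze_inv with (Rabs (b - a)); [apply Rabs_pos|]; intros n.
  pose proof (pos_INR n); unfold approach.
  replace (a + (b - a) / (INR n + 2) - a) with ((b - a) * / (INR n + 2)) by (field; lra).
  rewrite Rabs_mult, Rabs_inv, (Rabs_right (INR n + 2)) by lra.
  apply Rmult_le_compat_l; [apply Rabs_pos|]; apply Rinv_le_contravar; lra.
Qed.

Fixpoint running_max (s : nat -> R) (n : nat) : R :=
  match n with O => s O | S k => Rmax (running_max s k) (s (S k)) end.

Lemma running_max_spec (A : R -> Prop) (s : nat -> R) (n : nat) :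
  (forall k, A (s k)) -> A (running_max s n) /\ s n <= running_max s n.
Proof.
  intros HA; induction n as [|n IH]; simpl; [split; [apply HA|lra]|].
  unfold Rmax; destruct (Rle_dec (running_max s n) (s (S n))); split; try lra; [apply HA|apply IH].
Qed.

Lemma running_max_le (s : nat -> R) (b : R) (n : nat) :
  (forall k, s k <= b) -> running_max s n <= b.
Proof. intros Hb; induction n as [|n IH]; simpl; [apply Hb|apply Rmax_lub; auto]. Qed.

Lemma lub_growing_seq (A : R -> Prop) (W : R) :
  is_lub A W -> (exists x, A x) ->
  exists s, (forall n, A (s n)) /\ Un_growing s /\ Un_cv s W.
Proof.
  intros [HW HWmin] Hne.
  assert (Hclose : forall n, exists x, A x /\ W - / (INR n + 1) < x).
  { intros n; apply NNPP; intros Hn.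
    assert (W <= W - / (INR n + 1)).
    { apply HWmin; intros x Hx; apply Rnot_lt_le; intros Hlt; apply Hn; exists x; auto. }
    assert (0 < / (INR n + 1)) by (apply Rinv_0_lt_compat; pose proof (pos_INR n); lra).
    lra. }
  set (x := fun n => epsilon (inhabits 0) (fun x => A x /\ W - / (INR n + 1) < x)).
  assert (Hx : forall n, A (x n) /\ W - / (INR n + 1) < x n)
    by (intros n; apply epsilon_spec, Hclose).
  exists (running_max x); split; [|split].
  - intros n; apply (running_max_spec A x n (fun k => proj1 (Hx k))).
  - intros n; simpl; apply Rmax_l.
  - apply Un_cv_squeeze_inv with 1; [lra|]; intros n; rewrite Rmult_1_l.
    assert (x n <= running_max x n) by apply (running_max_spec A x n (fun k => proj1 (Hx k))).
    assert (running_max x n <= W) by (apply running_max_le; intros k; apply HW, Hx).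
    specialize (Hx n); rewrite Rabs_left1; lra.
Qed.

Lemma empty_of_limit_closed_right_open (bad : R -> Prop) (b : R) :
  (forall t, bad t -> t < b) ->
  (forall s t, (forall n, bad (s n)) -> Un_growing s -> Un_cv s t -> bad t) ->
  (forall s t, bad t -> (forall n, t < s n < b) -> Un_decreasing s -> Un_cv s t ->
     exists n, bad (s n)) ->
  forall t, ~ bad t.
Proof.
  intros Hb Hclosed Hopen t0 Ht0.
  destruct (completeness bad) as [W HW];
    [exists b; intros t Ht; apply Rlt_le, Hb, Ht|exists t0; exact Ht0|].
  destruct (lub_growing_seq bad W HW) as [s [Hs [Hgrow Hcv]]]; [exists t0; exact Ht0|].
  assert (HbadW : bad W) by exact (Hclosed s W Hs Hgrow Hcv).
  pose proof (Hb W HbadW) as HWb.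
  destruct (Hopen (approach W b) W HbadW) as [n Hn].
  - intros n; apply approach_between, HWb.
  - apply approach_decreasing; lra.
  - apply approach_cv.
  - pose proof (approach_between W b n HWb); pose proof (proj1 HW _ Hn); lra.
Qed.

Lemma empty_of_limit_closed_left_open (bad : R -> Prop) (a : R) :
  (forall t, bad t -> a < t) ->
  (forall s t, (forall n, bad (s n)) -> Un_decreasing s -> Un_cv s t -> bad t) ->
  (forall s t, bad t -> (forall n, a < s n < t) -> Un_growing s -> Un_cv s t ->
     exists n, bad (s n)) ->
  forall t, ~ bad t.
Proof.
  intros Ha Hclosed Hopen t Ht.
  apply (empty_of_limit_closed_right_open (fun t => bad (- t)) (- a)) with (- t);
    [| | |rewrite Ropp_involutive; exact Ht].
  - intros u Hu; specialize (Ha _ Hu); lra.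
  - intros s u Hs Hgrow Hcv.
    apply (Hclosed (opp_seq s)); [exact Hs| |apply CV_opp, Hcv].
    intros n; unfold opp_seq; specialize (Hgrow n); lra.
  - intros s u Hu Hs Hdec Hcv.
    apply (Hopen (opp_seq s) (- u) Hu); [| |apply CV_opp, Hcv].
    + intros n; unfold opp_seq; specialize (Hs n); lra.
    + intros n; unfold opp_seq; specialize (Hdec n); lra.
Qed.

(** * Restricted classical preferences *)

Lemma bcv_price (s : nat -> R) (a q : R) : Un_cv s a -> bcv (fun n => (s n, q)) (a, q).
Proof. intros Hs; split; [exact Hs|exact (Un_cv_const q)]. Qed.

Ltac box := unfold bbox, in_box in *; simpl in *; lra.

Lemma bbox_of_fst Rp Rq x : bbox Rq x -> fst x <= tR Rp -> bbox Rp x.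
Proof. destruct x; intros; box. Qed.

Lemma bbox_fst_le Rp x : bbox Rp x -> fst x <= tR Rp.
Proof. destruct x; intros; box. Qed.

Lemma bbox_inZ Rp x : bbox Rp x -> inZ x.
Proof. destruct x; unfold inZ; intros; box. Qed.

Definition dominates (x y : bundle) : Prop := fst x <= fst y /\ snd y <= snd x.

Section RestrictedClassical.

Variable Rp : pref.
Hypothesis Hrc : restricted_classical Rp.

Lemma tR_pos : 0 < tR Rp.
Proof. apply Hrc. Qed.

Lemma rel_total x y : bbox Rp x -> bbox Rp y -> rel Rp x y \/ rel Rp y x.
Proof. apply Hrc. Qed.

Lemma rel_trans x y z : bbox Rp x -> bbox Rp y -> bbox Rp z ->
  rel Rp x y -> rel Rp y z -> rel Rp x z.
Proof. destruct Hrc as (_ & _ & H & _); apply H. Qed.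

Lemma P_money q t1 t2 : 0 < q <= 1 -> 0 <= t1 -> t1 < t2 -> t2 <= tR Rp ->
  P Rp (t1, q) (t2, q).
Proof. destruct Hrc as (_ & _ & _ & H & _); apply H. Qed.

Lemma P_quality t q1 q2 : 0 <= t < tR Rp -> 0 <= q1 -> q1 < q2 -> q2 <= 1 ->
  P Rp (t, q2) (t, q1).
Proof. destruct Hrc as (_ & _ & _ & _ & H & _); apply H. Qed.

Lemma I_top_zero q : 0 <= q <= 1 -> I Rp (tR Rp, q) (0, 0).
Proof.
  destruct Hrc as (_ & _ & _ & _ & _ & H & _); intros Hq.
  destruct (H q Hq); split; assumption.
Qed.

Lemma I_zero_quality t : 0 <= t <= tR Rp -> I Rp (t, 0) (0, 0).
Proof.
  destruct Hrc as (_ & _ & _ & _ & _ & Htop & H & _); intros Ht.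
  destruct (Rlt_or_le t (tR Rp)) as [Hlt|Hge].
  - destruct (H t (conj (proj1 Ht) Hlt)); split; assumption.
  - replace t with (tR Rp) by lra; destruct (Htop 0 ltac:(lra)); split; assumption.
Qed.

Lemma rel_closed_le y x z : bbox Rp y -> (forall n, bbox Rp (x n)) -> bbox Rp z ->
  bcv x z -> (forall n, rel Rp (x n) y) -> rel Rp z y.
Proof.
  destruct Hrc as (_ & _ & _ & _ & _ & _ & _ & H); intros Hy Hx Hz Hc.
  exact (proj1 (H y x z Hy Hx Hz Hc)).
Qed.

Lemma rel_closed_ge y x z : bbox Rp y -> (forall n, bbox Rp (x n)) -> bbox Rp z ->
  bcv x z -> (forall n, rel Rp y (x n)) -> rel Rp y z.
Proof.
  destruct Hrc as (_ & _ & _ & _ & _ & _ & _ & H); intros Hy Hx Hz Hc.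
  exact (proj2 (H y x z Hy Hx Hz Hc)).
Qed.

Lemma rel_refl x : bbox Rp x -> rel Rp x x.
Proof. intros Hx; destruct (rel_total x x); auto. Qed.

Lemma P_rel_trans x y z : bbox Rp x -> bbox Rp y -> bbox Rp z ->
  P Rp x y -> rel Rp y z -> P Rp x z.
Proof.
  intros Hx Hy Hz [Hxy Hyx] Hyz; split; [apply rel_trans with y; auto|].
  intros Hzx; apply Hyx, rel_trans with z; auto.
Qed.

Lemma rel_P_trans x y z : bbox Rp x -> bbox Rp y -> bbox Rp z ->
  rel Rp x y -> P Rp y z -> P Rp x z.
Proof.
  intros Hx Hy Hz Hxy [Hyz Hzy]; split; [apply rel_trans with y; auto|].
  intros Hzx; apply Hzy, rel_trans with x; auto.
Qed.

Lemma rel_of_not_P x y : bbox Rp x -> bbox Rp y -> ~ P Rp x y -> rel Rp y x.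
Proof.
  intros Hx Hy HnP; destruct (rel_total x y Hx Hy) as [Hxy|Hyx]; auto.
  apply NNPP; intros Hnyx; apply HnP; split; auto.
Qed.

Lemma rel_dominates x y : bbox Rp x -> bbox Rp y -> dominates x y -> rel Rp x y.
Proof.
  destruct x as [tx qx], y as [ty qy]; unfold dominates; simpl; intros Hx Hy [Ht Hq].
  assert (Hmoney : rel Rp (tx, qx) (ty, qx)).
  { destruct (Req_dec tx ty) as [<-|Hne]; [apply rel_refl; box|].
    destruct (Req_dec qx 0) as [->|Hqx]; [|apply P_money; box].
    apply rel_trans with (0, 0); try box.
    - apply I_zero_quality; box.
    - apply I_zero_quality; box. }
  apply rel_trans with (ty, qx); try box; auto.
  destruct (Req_dec qx qy) as [<-|Hne]; [apply rel_refl; box|].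
  destruct (Req_dec ty (tR Rp)) as [->|Hty]; [|apply P_quality; box].
  apply rel_trans with (0, 0); try box.
  - apply I_top_zero; box.
  - apply I_top_zero; box.
Qed.

Lemma P_dominates x y : bbox Rp x -> bbox Rp y -> dominates x y -> x <> y ->
  0 < snd x -> fst x < tR Rp -> P Rp x y.
Proof.
  destruct x as [tx qx], y as [ty qy]; unfold dominates; simpl; intros Hx Hy [Ht Hq] Hne Hqx Htx.
  destruct (Rlt_or_le tx ty) as [Hlt|Hge].
  - apply P_rel_trans with (ty, qx); try box; [apply P_money; box|].
    apply rel_dominates; unfold dominates; simpl; box.
  - replace ty with tx in * by lra.
    apply P_quality; try box.
    destruct (Req_dec qy qx) as [->|]; [congruence|lra].
Qed.

Lemma P_zero t q : 0 < q <= 1 -> 0 <= t < tR Rp -> P Rp (t, q) (0, 0).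
Proof.
  intros Hq Ht; pose proof tR_pos.
  apply P_rel_trans with (tR Rp, q); try box; [apply P_money; box|].
  apply I_top_zero; box.
Qed.

Lemma dominates_indifferent_zero x y : bbox Rp x -> bbox Rp y -> dominates x y -> x <> y ->
  rel Rp y x -> I Rp x (0, 0) /\ I Rp y (0, 0).
Proof.
  destruct x as [tx qx], y as [ty qy]; unfold dominates; simpl; intros Hx Hy [Ht Hq] Hne Hyx.
  destruct (Rlt_or_le 0 qx) as [Hqx|Hqx]; [destruct (Rlt_or_le tx (tR Rp)) as [Htx|Htx]|].
  - exfalso; apply (proj2 (P_dominates (tx, qx) (ty, qy) Hx Hy (conj Ht Hq) Hne Hqx Htx) Hyx).
  - replace tx with (tR Rp) by box; replace ty with (tR Rp) by box.
    split; apply I_top_zero; box.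
  - replace qx with 0 by box; replace qy with 0 by box.
    split; apply I_zero_quality; box.
Qed.

Lemma exists_indifferent_price q lo y : 0 < q <= 1 -> 0 <= lo <= tR Rp -> bbox Rp y ->
  rel Rp (lo, q) y -> rel Rp y (tR Rp, q) ->
  exists t, lo <= t <= tR Rp /\ I Rp (t, q) y.
Proof.
  intros Hq Hlo Hy Hloy HyT.
  set (A := fun t => lo <= t <= tR Rp /\ rel Rp (t, q) y).
  assert (HAlo : A lo) by (split; auto; lra).
  destruct (completeness A) as [W HW];
    [exists (tR Rp); intros t Ht; apply Ht|exists lo; exact HAlo|].
  assert (HWlo : lo <= W) by (apply HW, HAlo).
  assert (HWle : W <= tR Rp) by (apply HW; intros t Ht; apply Ht).
  destruct (lub_growing_seq A W HW) as [s [Hs [_ Hcv]]]; [exists lo; exact HAlo|].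
  exists W; split; [lra|split].
  - apply rel_closed_le with (fun n => (s n, q)); auto; try box.
    + intros n; destruct (Hs n); box.
    + apply bcv_price, Hcv.
    + intros n; apply Hs.
  - destruct (Req_dec W (tR Rp)) as [->|HWne]; auto.
    apply rel_closed_ge with (fun n => (approach W (tR Rp) n, q)); auto; try box.
    + intros n; pose proof (approach_between W (tR Rp) n ltac:(lra)); box.
    + apply bcv_price, approach_cv.
    + intros n; pose proof (approach_between W (tR Rp) n ltac:(lra)).
      apply rel_of_not_P; try box; intros [Hrel _].
      assert (approach W (tR Rp) n <= W) by (apply HW; split; auto; lra); lra.
Qed.

Lemma exists_compensating_price q q' w : 0 <= q <= q' -> 0 < q' <= 1 -> 0 <= w <= tR Rp ->
  exists v, w <= v <= tR Rp /\ I Rp (v, q') (w, q).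
Proof.
  intros Hq Hq' Hw; pose proof tR_pos.
  apply exists_indifferent_price; auto; try box.
  - apply rel_dominates; unfold dominates; simpl; box.
  - apply rel_trans with (0, 0); try box.
    + apply rel_trans with (tR Rp, q); try box.
      * apply rel_dominates; unfold dominates; simpl; box.
      * apply I_top_zero; box.
    + apply I_top_zero; box.
Qed.

Lemma compensating_price_mono q q' u v u' v' : 0 <= q <= 1 -> 0 < q' <= 1 ->
  0 <= u <= tR Rp -> 0 <= v <= tR Rp -> 0 <= u' <= tR Rp -> 0 <= v' <= tR Rp ->
  I Rp (v, q') (u, q) -> I Rp (v', q') (u', q) -> u <= u' -> v <= v'.
Proof.
  intros Hq Hq' Hu Hv Hu' Hv' [Hvu _] [_ Hu'v'] Huu'.
  apply Rnot_lt_le; intros Hlt.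
  apply (proj2 (P_money q' v' v Hq' ltac:(lra) Hlt ltac:(lra))).
  apply rel_trans with (u, q); try box; auto.
  apply rel_trans with (u', q); try box; auto.
  apply rel_dominates; unfold dominates; simpl; box.
Qed.

End RestrictedClassical.

(** * Single crossing *)

Section SingleCrossing.

Variables R1 R2 : pref.
Hypotheses (H1 : restricted_classical R1) (H2 : restricted_classical R2)
  (Hsc : single_crossing R1 R2) (Hlt : tR R1 < tR R2).
Variables q q' : R.
Hypotheses (Hq : 0 < q) (Hqq' : q < q') (Hq' : q' <= 1).

Definition reversal (w : R) : Prop :=
  0 <= w < tR R1 /\
  exists v, 0 <= v <= tR R1 /\ I R1 (v, q') (w, q) /\ rel R2 (w, q) (v, q').

Lemma reversal_limit_closed s U :
  (forall n, reversal (s n)) -> Un_growing s -> Un_cv s U -> reversal U.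
Proof.
  intros Hs Hgrow Hcv; pose proof (tR_pos R1 H1).
  assert (HsU : forall n, s n <= U) by (apply growing_ineq; auto).
  assert (HU0 : 0 <= U) by (destruct (Hs 0%nat) as [? _]; specialize (HsU 0%nat); lra).
  assert (HU1 : U <= tR R1).
  { apply Un_cv_le_bound with s; auto; intros n; destruct (Hs n) as [? _]; lra. }
  destruct (exists_compensating_price R1 H1 q q' U) as [V [HV HVU]]; try lra.
  assert (HnV : forall n, rel R2 (s n, q) (V, q')).
  { intros n; destruct (Hs n) as [Hsn [vn [Hvn [HI Hrel]]]].
    assert (vn <= V) by (apply (compensating_price_mono R1 H1 q q' (s n) vn U V); auto; lra).
    apply (rel_trans R2 H2) with (vn, q'); auto; try box.
    apply (rel_dominates R2 H2); try box; unfold dominates; simpl; lra. }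
  assert (HUV : rel R2 (U, q) (V, q')).
  { apply (rel_closed_le R2 H2) with (fun n => (s n, q)); auto; try box.
    - intros n; destruct (Hs n) as [? _]; box.
    - apply bcv_price, Hcv. }
  split; [split; [lra|]|exists V; auto; split; [lra|auto]].
  destruct (Req_dec U (tR R1)) as [HUT|]; [exfalso|lra].
  rewrite HUT in HUV; replace V with (tR R1) in HUV by lra.
  apply (proj2 (P_quality R2 H2 (tR R1) q q' ltac:(lra) ltac:(lra) Hqq' Hq') HUV).
Qed.

Lemma reversal_right_open s U : reversal U -> (forall n, U < s n < tR R1) ->
  Un_decreasing s -> Un_cv s U -> exists n, reversal (s n).
Proof.
  intros [HU [V [HV [HVU HUV]]]] Hs Hdec Hcv; apply NNPP; intros Hnone.
  assert (HVn : forall n, rel R2 (V, q') (s n, q)).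
  { intros n; specialize (Hs n).
    destruct (exists_compensating_price R1 H1 q q' (s n)) as [vn [Hvn HI]]; try lra.
    assert (V <= vn) by (apply (compensating_price_mono R1 H1 q q' U V (s n) vn); auto; lra).
    apply (rel_trans R2 H2) with (vn, q'); try box.
    - apply (rel_dominates R2 H2); try box; unfold dominates; simpl; lra.
    - apply (rel_of_not_P R2 H2); try box; intros [Hrel _].
      apply Hnone; exists n; split; [lra|exists vn; split; [lra|auto]]. }
  assert (HVU2 : rel R2 (V, q') (U, q)).
  { apply (rel_closed_ge R2 H2) with (fun n => (s n, q)); auto; try box.
    - intros n; specialize (Hs n); box.
    - apply bcv_price, Hcv. }
  destruct Hsc as [_ Hcross].
  assert (Heq : (V, q') = (U, q)).
  { apply Hcross; try lra; try box; [apply Rmin_glb_lt; lra|exact HVU|split; auto]. }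
  injection Heq; lra.
Qed.

Lemma single_crossing_cut u v : 0 <= u < tR R1 -> 0 <= v <= tR R1 ->
  I R1 (v, q') (u, q) -> P R2 (v, q') (u, q).
Proof.
  intros Hu Hv HI; apply NNPP; intros HnP.
  apply (empty_of_limit_closed_right_open reversal (tR R1)
           (fun t Ht => proj2 (proj1 Ht)) reversal_limit_closed reversal_right_open u).
  split; auto; exists v; split; auto; split; auto.
  apply (rel_of_not_P R2 H2); auto; box.
Qed.

End SingleCrossing.

Lemma single_crossing_strict R1 R2 x w :
  restricted_classical R1 -> restricted_classical R2 -> single_crossing R1 R2 ->
  tR R1 < tR R2 -> inZ x -> blt x w -> bbox R1 w -> rel R1 w x -> P R2 w x.
Proof.
  destruct x as [tx qx], w as [tw qw]; unfold inZ, blt; simpl.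
  intros H1 H2 Hsc Hlt Hx [Ht Hq] Hw Hwx.
  pose proof (tR_pos R1 H1).
  destruct (Req_dec qx 0) as [->|Hqx].
  - apply (P_rel_trans R2 H2) with (0, 0); try box; [apply P_zero; auto; box|].
    apply I_zero_quality; auto; box.
  - destruct (exists_compensating_price R1 H1 qx qw tx) as [s [Hs HI]]; try box.
    assert (Hts : tw <= s).
    { apply Rnot_lt_le; intros Hlt'.
      apply (proj2 (P_money R1 H1 qw s tw ltac:(box) ltac:(lra) Hlt' ltac:(box))).
      apply (rel_trans R1 H1) with (tx, qx); auto; try box; apply HI. }
    apply (rel_P_trans R2 H2) with (s, qw); try box.
    + apply (rel_dominates R2 H2); try box; unfold dominates; simpl; lra.
    + apply (single_crossing_cut R1 R2); auto; box.
Qed.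

Section RichDomain.

Variable D : pref -> Prop.
Hypothesis Hd : rich_single_crossing D.

Lemma rich_rc Rp : D Rp -> restricted_classical Rp.
Proof. apply Hd. Qed.

Lemma rich_tR_inj R1 R2 : D R1 -> D R2 -> tR R1 = tR R2 -> R1 = R2.
Proof.
  intros HR1 HR2 Heq; apply NNPP; intros Hne.
  destruct Hd as [_ [Hsc _]]; exact (proj1 (Hsc R1 R2 HR1 HR2 Hne) Heq).
Qed.

Lemma rich_single_crossing_pair R1 R2 : D R1 -> D R2 -> tR R1 <> tR R2 ->
  single_crossing R1 R2.
Proof.
  intros HR1 HR2 Hne; destruct Hd as [_ [Hsc _]].
  apply Hsc; auto; intros ->; auto.
Qed.

Lemma rich_indifferent x w : inZ x -> inZ w -> blt x w ->
  exists Rp, D Rp /\ bbox Rp x /\ bbox Rp w /\ I Rp x w.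
Proof. apply Hd. Qed.

Lemma rich_tR_surj t : 0 < t -> exists Rp, D Rp /\ tR Rp = t.
Proof.
  intros Ht.
  destruct (rich_indifferent (0, 0) (t, 1)) as [Rp [HRp [_ [Hbox HI]]]];
    unfold inZ, blt; simpl; try lra.
  exists Rp; split; auto; pose proof (rich_rc Rp HRp) as Hrc.
  apply NNPP; intros Hne.
  apply (proj2 (P_zero Rp Hrc t 1 ltac:(lra) ltac:(box))), HI.
Qed.

Lemma lower_pref_prefers_smaller Rs Rr x w : D Rs -> D Rr -> blt x w ->
  bbox Rs x -> I Rs x w -> bbox Rr w -> tR Rr < tR Rs -> P Rr x w.
Proof.
  intros HRs HRr Hxw Hx HI Hw Hlt; pose proof (rich_rc Rr HRr) as Hrc.
  assert (Hxr : bbox Rr x) by (destruct x, w; unfold blt in Hxw; simpl in Hxw; box).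
  apply NNPP; intros HnP.
  apply (proj2 (single_crossing_strict Rr Rs x w Hrc (rich_rc Rs HRs)
                  (rich_single_crossing_pair Rr Rs HRr HRs ltac:(lra)) Hlt
                  (bbox_inZ Rs x Hx) Hxw Hw (rel_of_not_P Rr Hrc x w Hxr Hw HnP))).
  apply HI.
Qed.

Lemma higher_pref_prefers_larger Rs Rr x w : D Rs -> D Rr -> blt x w ->
  bbox Rs x -> bbox Rs w -> I Rs x w -> tR Rs < tR Rr -> P Rr w x.
Proof.
  intros HRs HRr Hxw Hx Hw HI Hlt.
  apply (single_crossing_strict Rs Rr); auto using rich_rc.
  - apply rich_single_crossing_pair; auto; lra.
  - apply (bbox_inZ Rs), Hx.
  - apply HI.
Qed.

End RichDomain.

Lemma ble_refl x : ble x x.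
Proof. left; reflexivity. Qed.

Lemma ble_trans x y z : ble x y -> ble y z -> ble x z.
Proof. intros [<-|Hxy] [<-|Hyz]; unfold ble; auto; right; unfold blt in *; lra. Qed.

Lemma ble_antisym x y : ble x y -> ble y x -> x = y.
Proof. intros [Hxy|Hxy] [Hyx|Hyx]; try congruence; unfold blt in *; lra. Qed.

Lemma blt_of_ble x y : ble x y -> x <> y -> blt x y.
Proof. intros [->|Hxy] Hne; [contradiction|exact Hxy]. Qed.

Lemma ble_fst x y : ble x y -> fst x <= fst y.
Proof. intros [->|Hxy]; [lra|unfold blt in Hxy; lra]. Qed.

Lemma rel_seq_mono {A : Type} (r : A -> A -> Prop) (a : nat -> A) :
  (forall x y z, r x y -> r y z -> r x z) -> (forall x, r x x) ->
  (forall n, r (a n) (a (S n))) -> forall i j, (i <= j)%nat -> r (a i) (a j).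
Proof. intros Htrans Hrefl Hmono i j Hij; induction Hij; eauto. Qed.

(* Each value of the finite range is either eventually avoided or, by
   antisymmetry, eventually the only value taken. *)
Lemma eventually_constant_of_finite_range {A : Type} (r : A -> A -> Prop) (l : list A) :
  (forall x y z, r x y -> r y z -> r x z) -> (forall x y, r x y -> r y x -> x = y) ->
  (forall x, r x x) ->
  forall a : nat -> A, (forall n, r (a n) (a (S n))) -> (forall n, In (a n) l) ->
  exists N, forall n, (N <= n)%nat -> a n = a N.
Proof.
  intros Htrans Hanti Hrefl; induction l as [|b l IH]; intros a Hmono Hin;
    [destruct (Hin 0%nat)|].
  destruct (classic (exists n0, forall n, (n0 <= n)%nat -> a n <> b)) as [[n0 Hn0]|Hb].
  - destruct (IH (fun k => a (n0 + k)%nat)) as [N HN].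
    + intros n; rewrite Nat.add_succ_r; apply Hmono.
    + intros n; destruct (Hin (n0 + n)%nat) as [Heq|]; auto.
      exfalso; apply (Hn0 (n0 + n)%nat); auto; lia.
    + exists (n0 + N)%nat; intros n Hn.
      replace n with (n0 + (n - n0))%nat by lia; apply HN; lia.
  - assert (Hoften : forall n0, exists n, (n0 <= n)%nat /\ a n = b).
    { intros n0; apply NNPP; intros Hn; apply Hb; exists n0; intros n Hn1 Heq; eauto. }
    destruct (Hoften 0%nat) as [m [_ Hm]]; exists m; intros n Hn; rewrite Hm.
    destruct (Hoften n) as [k [Hk Hak]]; apply Hanti.
    + rewrite <- Hak; apply (rel_seq_mono r a); auto.
    + rewrite <- Hm; apply (rel_seq_mono r a); auto.
Qed.

Lemma bcv_eventually_constant (a : nat -> bundle) N :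
  (forall n, (N <= n)%nat -> a n = a N) -> bcv a (a N).
Proof.
  intros H; split; intros eps Heps; exists N; intros n Hn; rewrite (H n Hn);
    unfold Rdist; rewrite Rminus_diag, Rabs_R0; lra.
Qed.

Lemma bcv_unique (a : nat -> bundle) z1 z2 : bcv a z1 -> bcv a z2 -> z1 = z2.
Proof.
  destruct z1, z2; intros [H1 H1'] [H2 H2']; simpl in *.
  f_equal; [exact (UL_sequence _ _ _ H1 H2)|exact (UL_sequence _ _ _ H1' H2')].
Qed.

Lemma order_cv_of_tR_cv D (Rs : nat -> pref) Q :
  Un_cv (fun n => tR (Rs n)) (tR Q) -> order_cv D Rs Q.
Proof.
  intros Hcv; split.
  - intros b _ Hb; unfold prec in *; destruct (Hcv (tR b - tR Q)) as [N HN]; [lra|].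
    exists N; intros n Hn; specialize (HN n Hn); unfold Rdist in HN.
    pose proof (Rle_abs (tR (Rs n) - tR Q)); lra.
  - intros a _ Ha; unfold prec in *; destruct (Hcv (tR Q - tR a)) as [N HN]; [lra|].
    exists N; intros n Hn; specialize (HN n Hn); unfold Rdist in HN.
    pose proof (Rle_abs (- (tR (Rs n) - tR Q))); rewrite Rabs_Ropp in *; lra.
Qed.

(** * Mechanisms *)

Section Mechanism.

Variables (D : pref -> Prop) (Rlo Rhi : pref) (F : pref -> bundle).
Hypotheses (Hd : rich_single_crossing D) (Hm : is_mechanism (interval D Rlo Rhi) F)
  (Hfin : finite_range (interval D Rlo Rhi) F).

Local Notation dom := (interval D Rlo Rhi).

Lemma dom_rc Rp : dom Rp -> restricted_classical Rp.
Proof. intros [HD _]; exact (rich_rc D Hd Rp HD). Qed.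

Section Monotone.

Hypothesis Hmono : monotone_mech dom F.

Lemma mech_monotone_precsim R1 R2 : dom R1 -> dom R2 -> precsim R1 R2 -> ble (F R1) (F R2).
Proof.
  intros H1 H2 [Hlt|Heq]; [apply Hmono; auto|].
  rewrite (rich_tR_inj D Hd R1 R2 (proj1 H1) (proj1 H2) Heq); apply ble_refl.
Qed.

Lemma mech_eventually_constant Rs : (forall n, dom (Rs n)) -> monotone_seq Rs ->
  exists N, forall n, (N <= n)%nat -> F (Rs n) = F (Rs N).
Proof.
  intros Hs [Hinc|Hdec]; destruct Hfin as [l Hl].
  - apply (eventually_constant_of_finite_range ble l ble_trans ble_antisym ble_refl);
      intros n; [apply mech_monotone_precsim; auto|apply Hl, Hs].
  - apply (eventually_constant_of_finite_range (fun x y => ble y x) l);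
      [eauto using ble_trans|intros; apply ble_antisym; auto|apply ble_refl| |];
      intros n; [apply mech_monotone_precsim; auto|apply Hl, Hs].
Qed.

End Monotone.

Section StrategyProof.

Hypothesis Hzero : forall Rp, dom Rp -> I Rp (F Rp) (0, 0) -> F Rp = (0, 0).
Hypothesis Hsp : restricted_SP dom F.

Lemma dominating_value_eq Rp b : dom Rp -> bbox Rp b -> dominates b (F Rp) ->
  rel Rp (F Rp) b -> b = F Rp.
Proof.
  intros HRp Hb Hdom Hrel; pose proof (dom_rc Rp HRp) as Hrc; apply NNPP; intros Hne.
  destruct (dominates_indifferent_zero Rp Hrc b (F Rp) Hb (Hm Rp HRp) Hdom Hne Hrel)
    as [Hb0 HF0].
  rewrite (Hzero Rp HRp HF0) in Hdom, Hne.
  destruct b as [tb qb]; unfold dominates in Hdom; simpl in Hdom.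
  replace tb with 0 in * by box.
  destruct (Req_dec qb 0) as [->|Hqb]; [contradiction|].
  apply (proj2 (P_zero Rp Hrc 0 qb ltac:(box) ltac:(pose proof (tR_pos Rp Hrc); lra))), Hb0.
Qed.

Lemma sp_monotone : monotone_mech dom F.
Proof.
  intros R1 R2 HR1 HR2 Hlt; unfold prec in Hlt.
  pose proof (dom_rc R1 HR1) as H1; pose proof (dom_rc R2 HR2) as H2.
  pose proof (Hm R1 HR1) as Hx; pose proof (Hm R2 HR2) as Hz.
  assert (Hzx : rel R2 (F R2) (F R1)).
  { apply Hsp; auto; apply bbox_of_fst with R1; auto; pose proof (bbox_fst_le _ _ Hx); lra. }
  assert (Hxz : fst (F R2) <= fst (F R1) -> rel R1 (F R1) (F R2)).
  { intros Hle; apply Hsp; auto; apply bbox_of_fst with R2; auto.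
    pose proof (bbox_fst_le _ _ Hx); lra. }
  assert (Hxdom : dominates (F R1) (F R2) -> ble (F R1) (F R2)).
  { intros Hdom; left; apply (dominating_value_eq R2); auto.
    apply bbox_of_fst with R1; auto; pose proof (bbox_fst_le _ _ Hx); lra. }
  assert (Hzdom : dominates (F R2) (F R1) -> ble (F R1) (F R2)).
  { intros Hdom; left; symmetry; apply (dominating_value_eq R1); auto.
    - apply bbox_of_fst with R2; auto; pose proof (bbox_fst_le _ _ Hx); destruct Hdom; lra.
    - apply Hxz, Hdom. }
  destruct (Rlt_or_le (fst (F R1)) (fst (F R2))) as [Ht|Ht];
    destruct (Rlt_or_le (snd (F R1)) (snd (F R2))) as [Hq|Hq].
  - right; split; auto.
  - apply Hxdom; split; lra.
  - apply Hzdom; split; lra.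
  - destruct (Req_dec (fst (F R1)) (fst (F R2))); [apply Hxdom; split; lra|].
    destruct (Req_dec (snd (F R1)) (snd (F R2))); [apply Hzdom; split; lra|].
    exfalso; apply (proj2 (single_crossing_strict R1 R2 (F R2) (F R1) H1 H2
      (rich_single_crossing_pair D Hd R1 R2 (proj1 HR1) (proj1 HR2) ltac:(lra)) Hlt
      (bbox_inZ _ _ Hz) ltac:(split; lra) Hx (Hxz Ht))), Hzx.
Qed.

(* A preference below [Rp] indifferent between [F Q0] and [F Rp] would make some
   [Q] above it with [F Q = F Q0] strictly prefer [F Rp]. *)
Lemma sp_indifferent_from_below Rp Q0 : dom Rp -> dom Q0 -> bbox Rp (F Q0) ->
  ble (F Q0) (F Rp) ->
  (forall a, D a -> prec a Rp -> exists Q, dom Q /\ prec a Q /\ F Q = F Q0) ->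
  I Rp (F Q0) (F Rp).
Proof.
  intros HRp HQ0 Hc Hle Hnear; pose proof (dom_rc Rp HRp) as Hrc.
  pose proof (Hm Rp HRp) as Hy.
  split; [|apply Hsp; auto]; apply NNPP; intros Hnc.
  destruct (classic (F Q0 = F Rp)) as [Heq|Hne]; [apply Hnc; rewrite Heq; apply rel_refl; auto|].
  destruct (rich_indifferent D Hd (F Q0) (F Rp) (bbox_inZ _ _ Hc) (bbox_inZ _ _ Hy)
             (blt_of_ble _ _ Hle Hne)) as [Rs [HRs [Hcs [Hys HI]]]].
  destruct (Rtotal_order (tR Rp) (tR Rs)) as [Hlt|[Heq|Hgt]].
  - apply Hnc, (lower_pref_prefers_smaller D Hd Rs Rp); auto using blt_of_ble; apply HRp.
  - pose proof (rich_tR_inj D Hd Rs Rp HRs (proj1 HRp) (eq_sym Heq)); subst Rs.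
    apply Hnc, HI.
  - destruct (Hnear Rs HRs Hgt) as [Q [HQ [HsQ HFQ]]].
    apply (proj2 (higher_pref_prefers_larger D Hd Rs Q (F Q0) (F Rp) HRs (proj1 HQ)
                    (blt_of_ble _ _ Hle Hne) Hcs Hys HI HsQ)).
    rewrite <- HFQ; apply Hsp; auto.
    apply bbox_of_fst with Rs; auto; pose proof (bbox_fst_le _ _ Hys); unfold prec in HsQ; lra.
Qed.

Lemma sp_indifferent_from_above Rp Q0 : dom Rp -> dom Q0 -> ble (F Rp) (F Q0) ->
  (forall a, D a -> prec Rp a -> exists Q, dom Q /\ prec Q a /\ F Q = F Q0) ->
  bbox Rp (F Q0) /\ I Rp (F Q0) (F Rp).
Proof.
  intros HRp HQ0 Hle Hnear; pose proof (dom_rc Rp HRp) as Hrc.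
  pose proof (Hm Rp HRp) as Hy.
  assert (Hc : bbox Rp (F Q0)).
  { apply bbox_of_fst with Q0; auto; apply Rnot_lt_le; intros Hgt.
    destruct (rich_tR_surj D Hd ((tR Rp + fst (F Q0)) / 2)) as [a [Ha Hta]];
      [pose proof (tR_pos Rp Hrc); lra|].
    destruct (Hnear a Ha) as [Q [HQ [HQa HFQ]]]; [unfold prec; lra|].
    pose proof (bbox_fst_le _ _ (Hm Q HQ)); rewrite HFQ in *; unfold prec in HQa; lra. }
  split; auto; split; [|apply Hsp; auto]; apply NNPP; intros Hnc.
  destruct (classic (F Rp = F Q0)) as [Heq|Hne]; [apply Hnc; rewrite Heq; apply rel_refl; auto|].
  destruct (rich_indifferent D Hd (F Rp) (F Q0) (bbox_inZ _ _ Hy) (bbox_inZ _ _ Hc)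
             (blt_of_ble _ _ Hle Hne)) as [Rs [HRs [Hys [Hcs HI]]]].
  destruct (Rtotal_order (tR Rp) (tR Rs)) as [Hlt|[Heq|Hgt]].
  - destruct (Hnear Rs HRs Hlt) as [Q [HQ [HQs HFQ]]].
    apply (proj2 (lower_pref_prefers_smaller D Hd Rs Q (F Rp) (F Q0) HRs (proj1 HQ)
                    (blt_of_ble _ _ Hle Hne) Hys HI ltac:(rewrite <- HFQ; apply Hm, HQ) HQs)).
    rewrite <- HFQ; apply Hsp; auto.
    apply bbox_of_fst with Rp; auto.
    pose proof (ble_fst _ _ Hle); pose proof (bbox_fst_le _ _ (Hm Q HQ)); rewrite HFQ in *; lra.
  - pose proof (rich_tR_inj D Hd Rs Rp HRs (proj1 HRp) (eq_sym Heq)); subst Rs.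
    apply Hnc, HI.
  - apply Hnc, (higher_pref_prefers_larger D Hd Rs Rp); auto using blt_of_ble; apply HRp.
Qed.

Lemma sp_VF_continuous : VF_continuous D dom F.
Proof.
  intros Rp Rs HRp Hs Hmon [Hcv_above Hcv_below].
  destruct (mech_eventually_constant sp_monotone Rs Hs Hmon) as [N HN].
  assert (Hlate : forall P : pref -> Prop, (exists M, forall n, (M <= n)%nat -> P (Rs n)) ->
            exists Q, dom Q /\ P Q /\ F Q = F (Rs N)).
  { intros P [M HM]; exists (Rs (Nat.max N M)); split; [apply Hs|split].
    - apply HM; lia.
    - apply HN; lia. }
  assert (Hgoal : bbox Rp (F (Rs N)) /\ I Rp (F (Rs N)) (F Rp)).
  { destruct (classic (exists n, (N <= n)%nat /\ tR (Rs n) <= tR Rp)) as [[n [Hn Hle]]|Hall].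
    - rewrite <- (HN n Hn); destruct Hle as [Hlt|Heq].
      + assert (Hbox : bbox Rp (F (Rs n))).
        { apply bbox_of_fst with (Rs n); [apply Hm, Hs|].
          pose proof (bbox_fst_le _ _ (Hm _ (Hs n))); lra. }
        split; auto; apply sp_indifferent_from_below; [exact HRp|apply Hs|exact Hbox| |].
        * apply sp_monotone; auto.
        * intros a Ha Hlta; rewrite (HN n Hn); apply Hlate, Hcv_below; auto.
      + rewrite (rich_tR_inj D Hd (Rs n) Rp (proj1 (Hs n)) (proj1 HRp) Heq).
        pose proof (dom_rc Rp HRp); split; [apply Hm; auto|split; apply rel_refl; auto].
    - apply sp_indifferent_from_above; [exact HRp|apply Hs| |].
      + apply sp_monotone; auto; unfold prec; apply Rnot_le_lt; intros Hle.
        apply Hall; exists N; auto.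
      + intros a Ha Hlta; apply Hlate, Hcv_above; auto. }
  exists (F (Rs N)); destruct Hgoal as [Hbox HI].
  split; [exact (bcv_eventually_constant (fun n => F (Rs n)) N HN)|].
  split; [apply bbox_fst_le|split]; auto.
Qed.

End StrategyProof.

Section MonotoneContinuous.

Hypotheses (HDlo : D Rlo) (Hmono : monotone_mech dom F) (Hvf : VF_continuous D dom F).

(* Junk for [t <= 0], where [D] has no member. *)
Definition pref_at (t : R) : pref := epsilon (inhabits Rlo) (fun Q => D Q /\ tR Q = t).

Lemma pref_at_spec t : 0 < t -> D (pref_at t) /\ tR (pref_at t) = t.
Proof. intros Ht; unfold pref_at; apply epsilon_spec, (rich_tR_surj D Hd t Ht). Qed.

Lemma pref_at_tR Q : D Q -> pref_at (tR Q) = Q.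
Proof.
  intros HQ; pose proof (tR_pos Q (rich_rc D Hd Q HQ)).
  destruct (pref_at_spec (tR Q)) as [HD Ht]; auto; apply (rich_tR_inj D Hd); auto.
Qed.

Lemma tR_pref_at t : tR Rlo <= t -> tR (pref_at t) = t.
Proof.
  intros Ht; pose proof (tR_pos Rlo (rich_rc D Hd Rlo HDlo)).
  apply pref_at_spec; lra.
Qed.

Lemma pref_at_dom t : tR Rlo <= t <= tR Rhi -> dom (pref_at t).
Proof.
  intros Ht; pose proof (tR_pref_at t (proj1 Ht)) as HtR.
  pose proof (tR_pos Rlo (rich_rc D Hd Rlo HDlo)).
  split; [apply pref_at_spec; lra|unfold precsim; rewrite HtR; lra].
Qed.

Lemma mech_at_mono t1 t2 : tR Rlo <= t1 -> t1 <= t2 -> t2 <= tR Rhi ->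
  ble (F (pref_at t1)) (F (pref_at t2)).
Proof.
  intros; apply mech_monotone_precsim; auto; try (apply pref_at_dom; lra).
  unfold precsim; rewrite !tR_pref_at; lra.
Qed.

Lemma limit_value_indifferent t s : tR Rlo <= t <= tR Rhi -> (forall n, tR Rlo <= s n <= tR Rhi) ->
  Un_growing s \/ Un_decreasing s -> Un_cv s t ->
  exists N, (forall n, (N <= n)%nat -> F (pref_at (s n)) = F (pref_at (s N))) /\
    bbox (pref_at t) (F (pref_at (s N))) /\ I (pref_at t) (F (pref_at (s N))) (F (pref_at t)).
Proof.
  intros Ht Hs Hs_mon Hcv.
  set (Rs := fun n => pref_at (s n)).
  assert (HRs : forall n, dom (Rs n)) by (intros n; apply pref_at_dom, Hs).
  assert (HtRs : forall n, tR (Rs n) = s n) by (intros n; apply tR_pref_at, Hs).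
  assert (HRs_mon : monotone_seq Rs).
  { unfold monotone_seq, precsim.
    destruct Hs_mon as [Hg|Hdc]; [left|right]; intros n; rewrite !HtRs; auto. }
  destruct (mech_eventually_constant Hmono Rs HRs HRs_mon) as [N HN].
  assert (Hcv_order : order_cv D Rs (pref_at t)).
  { apply order_cv_of_tR_cv; rewrite tR_pref_at by apply Ht.
    apply Un_cv_ext with s; auto. }
  destruct (Hvf (pref_at t) Rs (pref_at_dom t Ht) HRs HRs_mon Hcv_order) as [z [Hz [_ [Hbox HI]]]].
  rewrite (bcv_unique _ z (F (Rs N)) Hz (bcv_eventually_constant _ N HN)) in Hbox, HI.
  exists N; auto.
Qed.

Definition better_below (R0 : pref) (t : R) : Prop :=
  tR Rlo <= t <= tR R0 /\ P R0 (F (pref_at t)) (F R0).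

Lemma better_below_limit_closed R0 s t : dom R0 ->
  (forall n, better_below R0 (s n)) -> Un_growing s -> Un_cv s t -> better_below R0 t.
Proof.
  intros HR0 Hs Hgrow Hcv; pose proof (dom_rc R0 HR0) as H0.
  assert (Ht : tR Rlo <= t <= tR R0).
  { pose proof (growing_ineq s t Hgrow Hcv 0%nat); destruct (Hs 0%nat) as [? _]; split; [lra|].
    apply Un_cv_le_bound with s; auto; intros n; apply Hs. }
  assert (HR0hi : tR R0 <= tR Rhi) by apply HR0.
  destruct (limit_value_indifferent t s) as [N [_ [Hbox HI]]];
    [lra|intros n; destruct (Hs n) as [? _]; lra|left; exact Hgrow|exact Hcv|].
  destruct (Hs N) as [HsN Hc].
  pose proof (tR_pref_at t (proj1 Ht)) as HtR.
  assert (Hbox0 : bbox R0 (F (pref_at t))).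
  { apply bbox_of_fst with (pref_at t); [apply Hm, pref_at_dom; lra|].
    pose proof (bbox_fst_le _ _ (Hm _ (pref_at_dom t ltac:(lra)))); lra. }
  split; auto.
  destruct (classic (F (pref_at (s N)) = F (pref_at t))) as [<-|Hne]; auto.
  destruct (Req_dec t (tR R0)) as [HtR0|HtR0].
  - exfalso; rewrite HtR0, pref_at_tR in HI by apply HR0; exact (proj2 Hc (proj2 HI)).
  - assert (Hdomt : dom (pref_at t)) by (apply pref_at_dom; lra).
    apply (P_rel_trans R0 H0) with (F (pref_at (s N))); [exact Hbox0| | | |].
    + apply bbox_of_fst with (pref_at t); auto; pose proof (bbox_fst_le _ _ Hbox); lra.
    + apply Hm, HR0.
    + assert (Hlt : blt (F (pref_at (s N))) (F (pref_at t))).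
      { pose proof (growing_ineq s t Hgrow Hcv N).
        apply blt_of_ble; auto; apply mech_at_mono; lra. }
      exact (higher_pref_prefers_larger D Hd _ R0 _ _ (proj1 Hdomt) (proj1 HR0) Hlt Hbox
               (Hm _ Hdomt) HI ltac:(lra)).
    + apply Hc.
Qed.

Lemma better_below_right_open R0 s t : dom R0 -> better_below R0 t ->
  (forall n, t < s n < tR R0) -> Un_decreasing s -> Un_cv s t -> exists n, better_below R0 (s n).
Proof.
  intros HR0 [Ht HP] Hs Hdec Hcv; apply NNPP; intros Hnone.
  pose proof (dom_rc R0 HR0) as H0; assert (HR0hi : tR R0 <= tR Rhi) by apply HR0.
  destruct (limit_value_indifferent t s) as [N [_ [Hbox HI]]];
    [lra|intros n; specialize (Hs n); lra|right; exact Hdec|exact Hcv|].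
  pose proof (Hs N) as HsN.
  assert (HdomN : dom (pref_at (s N))) by (apply pref_at_dom; lra).
  assert (Hc0 : bbox R0 (F (pref_at (s N)))).
  { apply bbox_of_fst with (pref_at (s N)); [apply Hm; auto|].
    pose proof (bbox_fst_le _ _ (Hm _ HdomN)); rewrite tR_pref_at in * by lra; lra. }
  assert (Hnot : rel R0 (F R0) (F (pref_at (s N)))).
  { apply (rel_of_not_P R0 H0); [exact Hc0|apply Hm, HR0|].
    intros HPN; apply Hnone; exists N; split; auto; lra. }
  destruct (classic (F (pref_at t) = F (pref_at (s N)))) as [Heq|Hne].
  - rewrite Heq in HP; exact (proj2 HP Hnot).
  - assert (Hdomt : dom (pref_at t)) by (apply pref_at_dom; lra).
    assert (Hlt : blt (F (pref_at t)) (F (pref_at (s N))))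
      by (apply blt_of_ble; auto; apply mech_at_mono; lra).
    assert (Ht0 : bbox R0 (F (pref_at t))).
    { apply bbox_of_fst with (pref_at t); [apply Hm, Hdomt|].
      pose proof (bbox_fst_le _ _ (Hm _ Hdomt)); rewrite tR_pref_at in * by lra; lra. }
    assert (HPc : P R0 (F (pref_at (s N))) (F (pref_at t))).
    { exact (higher_pref_prefers_larger D Hd _ R0 _ _ (proj1 Hdomt) (proj1 HR0) Hlt
               (Hm _ Hdomt) Hbox (conj (proj2 HI) (proj1 HI)) ltac:(rewrite tR_pref_at; lra)). }
    exact (proj2 (P_rel_trans R0 H0 _ _ _ Hc0 Ht0 (Hm R0 HR0) HPc (proj1 HP)) Hnot).
Qed.

Lemma no_better_below R0 Q : dom R0 -> dom Q -> tR Q <= tR R0 -> ~ P R0 (F Q) (F R0).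
Proof.
  intros HR0 HQ HQR0 HP.
  apply (empty_of_limit_closed_right_open (better_below R0) (tR R0)) with (tR Q).
  - intros t [Ht HPt]; destruct (Req_dec t (tR R0)) as [->|]; [|lra].
    rewrite pref_at_tR in HPt by apply HR0; destruct (proj2 HPt (proj1 HPt)).
  - intros s t; apply better_below_limit_closed; auto.
  - intros s t; apply better_below_right_open; auto.
  - unfold better_below; rewrite pref_at_tR by apply HQ; split; auto; split; auto; apply HQ.
Qed.

Definition better_above (R0 : pref) (t : R) : Prop :=
  tR R0 <= t <= tR Rhi /\ bbox R0 (F (pref_at t)) /\ P R0 (F (pref_at t)) (F R0).

Lemma better_above_limit_closed R0 s t : dom R0 ->
  (forall n, better_above R0 (s n)) -> Un_decreasing s -> Un_cv s t -> better_above R0 t.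
Proof.
  intros HR0 Hs Hdec Hcv; pose proof (dom_rc R0 HR0) as H0.
  assert (HR0lo : tR Rlo <= tR R0) by apply HR0.
  assert (Ht : tR R0 <= t <= tR Rhi).
  { pose proof (decreasing_ineq s t Hdec Hcv 0%nat); destruct (Hs 0%nat) as [? _]; split; [|lra].
    apply Un_cv_ge_bound with s; auto; intros n; apply Hs. }
  destruct (limit_value_indifferent t s) as [N [_ [Hbox HI]]];
    [lra|intros n; destruct (Hs n) as [? _]; lra|right; exact Hdec|exact Hcv|].
  destruct (Hs N) as [HsN [Hc0 Hc]].
  assert (Hdomt : dom (pref_at t)) by (apply pref_at_dom; lra).
  assert (Hle : ble (F (pref_at t)) (F (pref_at (s N)))).
  { pose proof (decreasing_ineq s t Hdec Hcv N); apply mech_at_mono; lra. }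
  assert (Ht0 : bbox R0 (F (pref_at t))).
  { apply bbox_of_fst with (pref_at t); [apply Hm, Hdomt|].
    pose proof (ble_fst _ _ Hle); pose proof (bbox_fst_le _ _ Hc0); lra. }
  split; auto; split; auto.
  destruct (classic (F (pref_at t) = F (pref_at (s N)))) as [->|Hne]; auto.
  destruct (Req_dec t (tR R0)) as [HtR0|HtR0].
  - exfalso; rewrite HtR0, pref_at_tR in HI by apply HR0; exact (proj2 Hc (proj2 HI)).
  - assert (HPc : P R0 (F (pref_at t)) (F (pref_at (s N)))).
    { exact (lower_pref_prefers_smaller D Hd _ R0 _ _ (proj1 Hdomt) (proj1 HR0)
               (blt_of_ble _ _ Hle Hne) (Hm _ Hdomt) (conj (proj2 HI) (proj1 HI)) Hc0
               ltac:(rewrite tR_pref_at; lra)). }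
    exact (P_rel_trans R0 H0 _ _ _ Ht0 Hc0 (Hm R0 HR0) HPc (proj1 Hc)).
Qed.

Lemma better_above_left_open R0 s t : dom R0 -> better_above R0 t ->
  (forall n, tR R0 < s n < t) -> Un_growing s -> Un_cv s t -> exists n, better_above R0 (s n).
Proof.
  intros HR0 [Ht [Ht0 HP]] Hs Hgrow Hcv; apply NNPP; intros Hnone.
  pose proof (dom_rc R0 HR0) as H0; assert (HR0lo : tR Rlo <= tR R0) by apply HR0.
  destruct (limit_value_indifferent t s) as [N [_ [Hbox HI]]];
    [lra|intros n; specialize (Hs n); lra|left; exact Hgrow|exact Hcv|].
  pose proof (Hs N) as HsN.
  assert (Hdomt : dom (pref_at t)) by (apply pref_at_dom; lra).
  assert (Hle : ble (F (pref_at (s N))) (F (pref_at t))) by (apply mech_at_mono; lra).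
  assert (Hc0 : bbox R0 (F (pref_at (s N)))).
  { apply bbox_of_fst with (pref_at t); auto.
    pose proof (ble_fst _ _ Hle); pose proof (bbox_fst_le _ _ Ht0); lra. }
  assert (Hnot : rel R0 (F R0) (F (pref_at (s N)))).
  { apply (rel_of_not_P R0 H0); [exact Hc0|apply Hm, HR0|].
    intros HPN; apply Hnone; exists N; split; [lra|split; auto]. }
  destruct (classic (F (pref_at (s N)) = F (pref_at t))) as [Heq|Hne].
  - rewrite <- Heq in HP; exact (proj2 HP Hnot).
  - assert (HPc : P R0 (F (pref_at (s N))) (F (pref_at t))).
    { exact (lower_pref_prefers_smaller D Hd _ R0 _ _ (proj1 Hdomt) (proj1 HR0)
               (blt_of_ble _ _ Hle Hne) Hbox HI Ht0 ltac:(rewrite tR_pref_at; lra)). }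
    exact (proj2 (P_rel_trans R0 H0 _ _ _ Hc0 Ht0 (Hm R0 HR0) HPc (proj1 HP)) Hnot).
Qed.

Lemma no_better_above R0 Q : dom R0 -> dom Q -> tR R0 <= tR Q -> bbox R0 (F Q) ->
  ~ P R0 (F Q) (F R0).
Proof.
  intros HR0 HQ HR0Q Hbox HP.
  apply (empty_of_limit_closed_left_open (better_above R0) (tR R0)) with (tR Q).
  - intros t [Ht [_ HPt]]; destruct (Req_dec t (tR R0)) as [->|]; [|lra].
    rewrite pref_at_tR in HPt by apply HR0; destruct (proj2 HPt (proj1 HPt)).
  - intros s t; apply better_above_limit_closed; auto.
  - intros s t; apply better_above_left_open; auto.
  - unfold better_above; rewrite pref_at_tR by apply HQ; split; [split; auto; apply HQ|auto].
Qed.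

Lemma monotone_continuous_SP : restricted_SP dom F.
Proof.
  intros Rp Rq HRp HRq Hbox.
  apply (rel_of_not_P Rp (dom_rc Rp HRp)); [exact Hbox|apply Hm, HRp|].
  destruct (Rle_or_lt (tR Rq) (tR Rp)) as [Hle|Hlt].
  - apply no_better_below; auto.
  - apply no_better_above; auto; lra.
Qed.

End MonotoneContinuous.

End Mechanism.

Theorem mainTheorem17 (D : pref -> Prop) (Rlo Rhi : pref) (F : pref -> bundle) :
  rich_single_crossing D -> D Rlo -> D Rhi ->
  is_mechanism (interval D Rlo Rhi) F ->
  finite_range (interval D Rlo Rhi) F ->
  (forall Rp, interval D Rlo Rhi Rp -> I Rp (F Rp) (0, 0) -> F Rp = (0, 0)) ->
  (restricted_SP (interval D Rlo Rhi) F <->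
   (monotone_mech (interval D Rlo Rhi) F /\ VF_continuous D (interval D Rlo Rhi) F)).
Proof.
  intros Hd HDlo _ Hm Hfin Hzero; split.
  - intros Hsp; split.
    + exact (sp_monotone D Rlo Rhi F Hd Hm Hzero Hsp).
    + exact (sp_VF_continuous D Rlo Rhi F Hd Hm Hfin Hzero Hsp).
  - intros [Hmono Hvf]; exact (monotone_continuous_SP D Rlo Rhi F Hd Hm Hfin HDlo Hmono Hvf).
Qed.
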